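(* Let $(X,d)$ be a separable metric space, $T\colon X\to X$ Borel measurable, and $\mu$ a $T$-invariant Borel probability measure with Hausdorff dimension $\alpha$. Then $C_\phi\le 1/\alpha$ (with $1/0=\infty$), where \[C_\phi=\sup\big(\{0\}\cup\{s>0:\ \liminf_{n\to\infty}n^s d(T^nx,y)=0 \text{ for }\mu\times\mu\text{-a.e. }(x,y)\}\big).\]
   Context: The Hausdorff dimension of $\mu$ (with respect to $d$) is understood as $\inf\{\dim_H E:\ E \text{ Borel},\ \mu(E)=1\}$, where $\dim_H$ is Hausdorff dimension of sets. *)

From HB Require Import structures.
From mathcomp Require Import all_boot all_order all_algebra.
From mathcomp Require Import all_classical all_reals all_analysis.
Unset Printing Implicit Defensive.
Import Order.TTheory GRing.Theory Num.Theory.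
Local Open Scope classical_set_scope.
Local Open Scope ring_scope.

Section metric_defs.
Context {R : realType} {X : Type}.
Variable d : X -> X -> R.

Definition is_metric : Prop :=
  [/\ forall x y, 0 <= d x y,
      forall x y, d x y = 0 <-> x = y,
      forall x y, d x y = d y x &
      forall x y z, d x z <= d x y + d y z].

Definition separable_metric : Prop :=
  exists D : set X, countable D /\
    forall x (e : R), 0 < e -> exists2 y, D y & d x y < e.

Definition metric_open (A : set X) : Prop :=
  forall x, A x -> exists2 r : R, 0 < r & [set y | d x y < r] `<=` A.

(* diameter of a set, as an extended real (sup of the empty set is -oo,
   but empty sets are given cost 0 below) *)
Definition diam (U : set X) : \bar R :=
  ereal_sup [set (d x y)%:E | x in U & y in U].

Definition hcost (s : R) (U : set X) : \bar R :=
  if U == set0 then 0%E else ((fine (diam U)) `^ s)%:E.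

Definition hausdorff_content (s delta : R) (E : set X) : \bar R :=
  ereal_inf [set (\sum_(0 <= i <oo) hcost s (U i))%E | U in
    [set U : nat -> set X |
       E `<=` \bigcup_i U i /\
       forall i x y, U i x -> U i y -> d x y <= delta]].

Definition hausdorff_measure (s : R) (E : set X) : \bar R :=
  ereal_sup [set hausdorff_content s delta E | delta in [set delta : R | 0 < delta]].

Definition hausdorff_dim (E : set X) : \bar R :=
  ereal_inf [set s%:E | s in [set s : R | 0 <= s /\ hausdorff_measure s E = 0%E]].

End metric_defs.

Definition hausdorff_dim_measure {R : realType} {X : pointedType}
  (d : X -> X -> R)
  (mu : set (g_sigma_algebraType (metric_open d)) -> \bar R) : \bar R :=
  ereal_inf [set hausdorff_dim d E | E in
     [set E : set X | (metric_open d).-sigma.-measurable E /\ mu E = 1%E]].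

Definition ereal_recip {R : realType} (a : \bar R) : \bar R :=
  match a with
  | r%:E => if r == 0 then +oo%E else (r^-1)%:E
  | _ => 0%E
  end.

Definition C_phi {R : realType} {X : pointedType} (d : X -> X -> R) (T : X -> X)
  (mu : {measure set (g_sigma_algebraType (metric_open d)) -> \bar R}) : \bar R :=
  ereal_sup ([set 0%E] `|` [set s%:E | s in [set s : R | 0 < s /\
     {ae (mu \x mu)%E, forall z : g_sigma_algebraType (metric_open d) *
                                  g_sigma_algebraType (metric_open d),
        limn_einf (fun n : nat => ((n%:R `^ s) * d (iter n T z.1) z.2)%:E) = 0%E}]]).

From HB Require Import structures.
From mathcomp Require Import all_boot all_order all_algebra.
From mathcomp Require Import all_classical all_reals all_analysis.
From mathcomp Require Import zify.
Set Implicit Arguments.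
Unset Strict Implicit.
Import Order.TTheory GRing.Theory Num.Theory.
Local Open Scope classical_set_scope.
Local Open Scope ring_scope.

(* If the condition defining C_phi holds for some s > 0, Fubini gives a point x
   whose orbit satisfies liminf n^s d(T^n x, y) = 0 for mu-almost every y.  Each
   such y lies, for every c > 0, in some ball B(T^(n+1) x, c (n+1)^-s); these balls
   cover a set of full measure with total t-dimensional cost (2c)^t zeta(s t),
   which tends to 0 with c as soon as s t > 1.  Hence that set has Hausdorff
   dimension at most 1/s, and so does mu. *)

Section riemannR_convergence.
Context {R : realType}.

Lemma riemannR_sum_pow2_le (p : R) (K : nat) : 0 <= p ->
  \sum_(0 <= i < (2 ^ K).-1) riemannR p i <= \sum_(0 <= k < K) (2 / 2 `^ p) ^+ k.
Proof.
move=> p0; elim: K => [|K IH]; first by rewrite expn0 /= !big_geq.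
have riemannR_le i j : (i <= j)%N -> riemannR p j <= riemannR p i.
  move=> ij; rewrite /= lef_pV2 ?posrE ?powR_gt0//.
  by rewrite ge0_ler_powR ?nnegrE ?ler_nat.
have -> : (2 ^ K.+1).-1 = ((2 ^ K).-1 + 2 ^ K)%N.
  by rewrite expnS; have := expn_gt0 2 K; lia.
rewrite (big_cat_nat _ (leq_addr _ _)) //= big_nat_recr //=.
apply: lerD => //.
(* Cauchy condensation: each of the [2 ^ K] terms of the block is at most [(2 ^ K) ^- p]. *)
apply: (@le_trans _ _ (\sum_((2 ^ K).-1 <= i < (2 ^ K).-1 + 2 ^ K) riemannR p (2 ^ K).-1)).
  by apply: ler_sum_nat => i /andP[+ _]; exact: riemannR_le.
rewrite sumr_const_nat addKn /riemannR prednK ?expn_gt0 //.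
rewrite natrX -powR_mulrn // powRAC powR_mulrn ?powR_ge0 // -exprVn.
by rewrite -[_ *+ _]mulr_natr natrX -exprMn mulrC.
Qed.

Lemma riemannR_nneseries_bounded (p : R) : 1 < p ->
  exists2 Z : R, 0 < Z & (\sum_(0 <= i <oo) (riemannR p i)%:E <= Z%:E)%E.
Proof.
move=> p1; have p0 : 0 <= p by rewrite (le_trans _ (ltW p1)).
set r := 2 / 2 `^ p.
have r0 : 0 < r by rewrite divr_gt0 ?powR_gt0.
have r1 : r < 1.
  rewrite ltr_pdivrMr ?powR_gt0 // mul1r -[X in X < _]powRr1 //.
  by rewrite /powR !gt_eqF // ltr_expR ltr_pM2r ?ln_gt0 ?ltr1n.
exists (1 - r)^-1; first by rewrite invr_gt0 subr_gt0.
apply: lime_le.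
  by apply: is_cvg_nneseries => i _ _; rewrite lee_fin ltW ?riemannR_gt0.
apply: nearW => M; rewrite sumEFin lee_fin.
have M_le : (M <= (2 ^ M).-1)%N by have := ltn_expl M (isT : (1 < 2)%N); lia.
apply: (@le_trans _ _ (\sum_(0 <= i < (2 ^ M).-1) riemannR p i)).
  rewrite (big_cat_nat (leq0n M) M_le) /= lerDl.
  by apply: sumr_ge0 => i _; rewrite ltW ?riemannR_gt0.
apply: (le_trans (riemannR_sum_pow2_le M p0)).
have r1' : `|r| < 1 by rewrite ger0_norm ?ltW.
have := geometric_le_lim M ler01 r0 r1'; rewrite mul1r seriesEnat.
by apply: le_trans; apply: ler_sum => k _; rewrite /= mul1r.
Qed.

End riemannR_convergence.

Section hausdorff_measure_of_ball_covers.
Context {R : realType} {X : Type} (d : X -> X -> R).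
Hypothesis dm : is_metric d.

Lemma hcost_le_powR (U : set X) (t b : R) : 0 <= t -> 0 <= b ->
  (forall x y, U x -> U y -> d x y <= b) -> (hcost d t U <= (b `^ t)%:E)%E.
Proof.
case: dm => _ deq _ _ t0 b0 Ub; rewrite /hcost; case: ifPn => [_|/set0P[x Ux]].
  by rewrite lee_fin powR_ge0.
have diam_le : (diam d U <= b%:E)%E.
  by apply: ge_ereal_sup => _ [y Uy [z Uz <-]]; rewrite lee_fin Ub.
have diam_ge0 : (0 <= diam d U)%E.
  by apply: ereal_sup_ubound; exists x => //; exists x => //; rewrite (deq x x).2.
move: diam_ge0 diam_le; case: (diam d U) => [u| |] //= u0 ub.
by rewrite lee_fin ge0_ler_powR ?nnegrE.
Qed.

Lemma hcost_ge0 (t : R) (U : set X) : (0 <= hcost d t U)%E.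
Proof. by rewrite /hcost; case: ifPn; rewrite ?lee_fin ?powR_ge0. Qed.

Lemma hausdorff_content_ball_cover (a : nat -> X) (r : nat -> R) (t delta : R)
    (E : set X) :
  0 <= t -> (forall i, 0 <= r i) -> (forall i, 2 * r i <= delta) ->
  E `<=` \bigcup_i [set y | d (a i) y < r i] ->
  (hausdorff_content d t delta E <= \sum_(0 <= i <oo) ((2 * r i) `^ t)%:E)%E.
Proof.
case: dm => _ _ dsym dtri t0 r0 r_delta Ecover.
set U := fun i => [set y | d (a i) y < r i].
have U_diam i y z : U i y -> U i z -> d y z <= 2 * r i.
  rewrite /U /= => ay az; rewrite (le_trans (dtri _ (a i) _)) // dsym.
  by rewrite mulr2n mulrDl mul1r lerD ?ltW.
apply: le_trans.
  apply: ereal_inf_lbound; exists U => //; split => // i y z Uy Uz.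
  exact: le_trans (U_diam i y z Uy Uz) (r_delta i).
apply: lee_nneseries => [i _ _|i _]; first exact: hcost_ge0.
by apply: hcost_le_powR => //; [rewrite mulr_ge0 | exact: U_diam].
Qed.

Definition well_approximable (a : nat -> X) (s : R) : set X :=
  [set y | forall c : R, 0 < c -> exists n, n.+1%:R `^ s * d (a n) y < c].

Lemma hausdorff_content_well_approximable (a : nat -> X) (s t c delta Z : R)
    (E : set X) :
  0 < s -> 0 < t -> 0 < c -> 2 * c <= delta ->
  (\sum_(0 <= i <oo) (riemannR (s * t) i)%:E <= Z%:E)%E ->
  E `<=` well_approximable a s ->
  (hausdorff_content d t delta E <= ((2 * c) `^ t * Z)%:E)%E.
Proof.
move=> s0 t0 c0 c_delta Zbound Eapprox.
have ws1 i : 1 <= i.+1%:R `^ s :> R.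
  by rewrite -[leLHS](powRr0 i.+1%:R); apply: ler_powR; rewrite ?ler1n ?ltW.
set r := fun i : nat => c / i.+1%:R `^ s.
apply: (le_trans (@hausdorff_content_ball_cover a r t delta E (ltW t0) _ _ _)).
- by move=> i; rewrite divr_ge0 ?ltW.
- move=> i; apply: le_trans c_delta; rewrite ler_wpM2l // ler_pdivrMr //.
  by rewrite ler_peMr ?(ltW c0) ?ws1.
- move=> y /Eapprox /(_ c c0) [n an]; exists n => //=.
  by rewrite ltr_pdivlMr // mulrC.
have cost_riemannR i : (2 * r i) `^ t = (2 * c) `^ t * riemannR (s * t) i.
  rewrite /r mulrA powRM ?mulr_ge0 ?invr_ge0 ?powR_ge0 ?ltW //; congr (_ * _).
  by rewrite -powR_inv1 ?powR_ge0 // -!powRrM mulN1r mulrN powRN.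
under eq_eseriesr do rewrite cost_riemannR EFinM.
rewrite nneseriesZl => [|i _]; last by rewrite lee_fin ltW ?riemannR_gt0 ?mulr_ge0 ?ltW.
by rewrite EFinM lee_pmul2l ?lte_fin ?powR_gt0 ?mulr_gt0.
Qed.

Lemma hausdorff_content_well_approximable_eq0 (a : nat -> X) (s t delta : R)
    (E : set X) :
  0 < s -> 1 < s * t -> 0 < delta -> E `<=` well_approximable a s ->
  hausdorff_content d t delta E = 0%E.
Proof.
move=> s0 st1 delta0 Eapprox.
have t0 : 0 < t by rewrite -(pmulr_rgt0 _ s0) (lt_trans ltr01 st1).
have [Z Z0 Zbound] := riemannR_nneseries_bounded st1.
apply/le_anti/andP; split; last first.
  apply: le_ereal_inf_tmp => _ [U _ <-].
  by apply: nneseries_ge0 => i _ _; exact: hcost_ge0.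
apply/lee_addgt0Pr => e e0; rewrite add0e.
set b := (e / Z) `^ t^-1.
have b0 : 0 < b by rewrite powR_gt0 // divr_gt0.
set c := Num.min (delta / 2) (b / 2).
have c0 : 0 < c by rewrite lt_min !divr_gt0.
have c_delta : 2 * c <= delta by rewrite mulrC -ler_pdivlMr // ge_min lexx.
have c_b : 2 * c <= b by rewrite mulrC -ler_pdivlMr // ge_min lexx orbT.
apply: (le_trans (hausdorff_content_well_approximable s0 t0 c0 c_delta Zbound Eapprox)).
have -> : e = b `^ t * Z.
  by rewrite /b -powRrM mulVf ?gt_eqF // powRr1 ?divfK ?gt_eqF // divr_ge0 ?ltW.
rewrite lee_fin ler_pM2r //.
by apply: ge0_ler_powR; rewrite ?nnegrE ?mulr_ge0 ?(ltW t0) ?(ltW b0) ?(ltW c0).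
Qed.

Lemma hausdorff_measure_well_approximable (a : nat -> X) (s t : R) (E : set X) :
  0 < s -> 1 < s * t -> E `<=` well_approximable a s ->
  hausdorff_measure d t E = 0%E.
Proof.
move=> s0 st1 Eapprox; apply/le_anti/andP; split.
  apply: ge_ereal_sup => _ [delta delta0 <-].
  by rewrite (hausdorff_content_well_approximable_eq0 s0 st1 delta0 Eapprox).
apply: ereal_sup_ubound; exists 1; first exact: ltr01.
exact: hausdorff_content_well_approximable_eq0 s0 st1 ltr01 Eapprox.
Qed.

Lemma hausdorff_dim_well_approximable (a : nat -> X) (s : R) (E : set X) :
  0 < s -> E `<=` well_approximable a s -> (hausdorff_dim d E <= (s^-1)%:E)%E.
Proof.
move=> s0 Eapprox; apply/lee_addgt0Pr => e e0.
apply: ereal_inf_lbound; exists (s^-1 + e) => //; split.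
  by rewrite addr_ge0 ?invr_ge0 ?ltW.
apply: (hausdorff_measure_well_approximable s0 _ Eapprox).
by rewrite mulrDr mulfV ?gt_eqF // ltrDl mulr_gt0.
Qed.

End hausdorff_measure_of_ball_covers.

Section product_sections.
Context {R : realType} {d1 d2 : measure_display}.
Context {T1 : measurableType d1} {T2 : measurableType d2}.
Local Open Scope ereal_scope.

Lemma ae_probability_full_set (mu : probability T2 R) (Q : T2 -> Prop) :
  {ae mu, forall y, Q y} -> exists E, [/\ measurable E, mu E = 1 & E `<=` Q].
Proof.
case=> N [mN muN0 notQN]; exists (~` N); split; first exact: measurableC.
  by rewrite probability_setC // muN0 sube0.
by move=> y Ny; apply: contrapT => /notQN.
Qed.

(* Tonelli for the indicator of a null set: almost every [x]-section is null. *)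
Lemma ae_product_measure1_section (m1 : probability T1 R)
    (m2 : {sigma_finite_measure set T2 -> \bar R}) (P : T1 * T2 -> Prop) :
  {ae m1 \x m2, forall z, P z} -> exists x, {ae m2, forall y, P (x, y)}.
Proof.
case=> A [mA mA0 notPA].
have mf := measurable_fun_xsection m2 mA; set f := m2 \o xsection A in mf.
have [N [mN mN0 fN]] : ae_eq m1 setT f (cst 0).
  apply/(ae_eq_integral_abs m1 measurableT mf); rewrite -[RHS]mA0.
  by apply: eq_integral => x _; rewrite gee0_abs.
have [x Nx] : exists x, ~ N x.
  apply: contrapT => allN; have : m1 setT <= m1 N.
    by apply: le_measure; rewrite ?inE // => x _; apply: contrapT => Nx; apply: allN; exists x.
  by rewrite mN0 probability_setT lee_fin ler10.
exists x, (xsection A x); split; first exact: measurable_xsection.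
  by apply: contrapT => fx; apply: Nx; apply: fN => /(_ I).
by move=> y notP; rewrite /xsection /= inE; exact: notPA.
Qed.

End product_sections.

Lemma limn_einf_eq0_lt (R : realType) (u : (\bar R)^nat) : limn_einf u = 0%E ->
  forall c : R, 0 < c -> forall N, exists2 n, (N <= n)%N & (u n < c%:E)%E.
Proof.
rewrite limn_einf_lim => u0 c c0 N.
have : (einfs u N <= limn (einfs u))%E.
  apply: lime_ge; first exact: is_cvg_einfs.
  by near=> m; apply: nondecreasing_einfs; near: m; exists N.
rewrite u0 => uN0.
have : (einfs u N < c%:E)%E by apply: (le_lt_trans uN0); rewrite lte_fin.
by move=> /ereal_inf_lt [_ [n /= Nn <-] un]; exists n.
Unshelve. all: by end_near. Qed.

Lemma limn_einf_eq0_well_approximable (R : realType) (X : Type) (d : X -> X -> R)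
    (x : nat -> X) (s : R) (y : X) :
  limn_einf (fun n => (n%:R `^ s * d (x n) y)%:E) = 0%E ->
  well_approximable d (fun n => x n.+1) s y.
Proof.
move=> /limn_einf_eq0_lt liminf0 c c0.
have [[|n] // _ xn] := liminf0 c c0 1%N.
by exists n; rewrite -lte_fin.
Qed.

Section ereal_recip.
Context {R : realType}.
Local Open Scope ereal_scope.

Lemma ereal_recip_ge0 (D : \bar R) : 0 <= D -> 0 <= ereal_recip D.
Proof.
by case: D => [r| |] //= r0; case: ifPn => // _; rewrite lee_fin invr_ge0 -lee_fin.
Qed.

Lemma le_ereal_recip (D : \bar R) (s : R) :
  (0 < s)%R -> 0 <= D -> D <= (s^-1)%:E -> s%:E <= ereal_recip D.
Proof.
case: D => [r| |] //= s0 r0 rs; case: ifPn => [_|r_neq0]; first exact: leey.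
have r_gt0 : (0 < r)%R by rewrite lt_neqAle eq_sym r_neq0 -lee_fin.
by rewrite lee_fin -[leLHS]invrK lef_pV2 ?posrE ?invr_gt0 // -lee_fin.
Qed.

End ereal_recip.

Lemma hausdorff_dim_measure_ge0 (R : realType) (X : pointedType) (d : X -> X -> R)
    (mu : set (g_sigma_algebraType (metric_open d)) -> \bar R) :
  (0 <= hausdorff_dim_measure d mu)%E.
Proof.
apply: le_ereal_inf_tmp => _ [E _ <-].
by apply: le_ereal_inf_tmp => _ [t [t0 _] <-]; rewrite lee_fin.
Qed.

(* For a generic [x], the points [y] approximated along its orbit form a set of
   full measure and of dimension at most [1 / s]. *)
Lemma hausdorff_dim_measure_le_inv_rate (R : realType) (X : pointedType)
    (d : X -> X -> R)
    (T : g_sigma_algebraType (metric_open d) -> g_sigma_algebraType (metric_open d))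
    (mu : probability (g_sigma_algebraType (metric_open d)) R) (s : R) :
  is_metric d -> 0 < s ->
  {ae (mu \x mu)%E, forall z : g_sigma_algebraType (metric_open d) *
                               g_sigma_algebraType (metric_open d),
     limn_einf (fun n : nat => ((n%:R `^ s) * d (iter n T z.1) z.2)%:E) = 0%E} ->
  (hausdorff_dim_measure d mu <= (s^-1)%:E)%E.
Proof.
move=> dm s0 rate.
have [x x_generic] := ae_product_measure1_section rate.
have [E [mE muE Eorbit]] := ae_probability_full_set x_generic.
apply: (@le_trans _ _ (hausdorff_dim d E)).
  by apply: ereal_inf_lbound; exists E.
apply: (hausdorff_dim_well_approximable dm (a := fun n => iter n.+1 T x) s0).
by move=> y /Eorbit; exact: limn_einf_eq0_well_approximable.
Qed.

Theorem proposition6p10 (R : realType) (X : pointedType) (d : X -> X -> R)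
  (T : g_sigma_algebraType (metric_open d) -> g_sigma_algebraType (metric_open d))
  (mu : probability (g_sigma_algebraType (metric_open d)) R) :
  is_metric d -> separable_metric d ->
  measurable_fun setT T ->
  (forall A, (metric_open d).-sigma.-measurable A -> mu (T @^-1` A) = mu A) ->
  (C_phi d T mu <= ereal_recip (hausdorff_dim_measure d mu))%E.
Proof.
move=> dm _ _ _.
have D0 := hausdorff_dim_measure_ge0 mu.
apply: ge_ereal_sup => _ [-> | [s [s0 rate] <-]]; first exact: ereal_recip_ge0.
exact: le_ereal_recip s0 D0 (hausdorff_dim_measure_le_inv_rate dm s0 rate).
Qed.
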